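(* Fix $q\ge2$. Let $\Delta_n=\log_q n-\lceil\log_q n\rceil$ and $$F(\Delta)=\max_{z\in\{-2,-1,0\}}\Big\{\Delta-z-(\log_q e)(q-1)q^{\Delta-z-1}\Big\}.$$ Then $$\lim_{n\to\infty}\frac{\mathcal C_1(n,q)}{\frac{q^n}{n}\big(\frac{q-1}{q}\big)^2q^{F(\Delta_n)}}=1,$$ and for every $\Delta\in(-1,0]$, $\big(\frac{q-1}{q}\big)^2q^{F(\Delta)}\le\frac{q-1}{eq}$. Moreover, the latter inequality is tight: along any subsequence of $n\to\infty$ with $\Delta_n=-\log_q(q-1)$ (or $\Delta_n\to-\log_q(q-1)$), $\mathcal C_1(n,q)\cdot\frac{n}{q^n}\to\frac{q-1}{eq}$.
   Context: $\Sigma_q=\{0,\dots,q-1\}$. For integers $1\le k<n$, $\mathcal C_1(n,q,k)$ is the set of $\vec a\in\Sigma_q^n$ with $a_1=\dots=a_k=0$, $a_{k+1}\ne0$, $a_n\ne0$, and $(a_{k+2},\dots,a_{n-1})$ containing no run of $k$ consecutive zeros. $\mathcal C_1(n,q)=\max_{1\le k<n}|\mathcal C_1(n,q,k)|$. *)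

From Stdlib Require Import Reals Lra Lia Arith List Bool.
Import ListNotations.
Open Scope R_scope.

Fixpoint words (q n : nat) : list (list nat) :=
  match n with
  | O => [ [] ]
  | S m => flat_map (fun d => map (cons d) (words q m)) (seq 0 q)
  end.

Definition has_zero_run (k : nat) (s : list nat) : bool :=
  existsb (fun i => Nat.leb (i + k) (length s) &&
                    forallb (fun j => Nat.eqb (nth (i + j) s 1%nat) 0%nat) (seq 0 k))
          (seq 0 (length s)).

(* Membership in C_1(n,q,k), for a word a = (a_1,...,a_n) stored 0-based:
   a_i = nth (i-1) a.  Conditions: a_1=...=a_k=0, a_{k+1}<>0, a_n<>0,
   and the middle block (a_{k+2},...,a_{n-1}) has no run of k zeros. *)
Definition in_C1 (n k : nat) (a : list nat) : bool :=
  forallb (fun i => Nat.eqb (nth i a 0%nat) 0%nat) (seq 0 k) &&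
  negb (Nat.eqb (nth k a 0%nat) 0%nat) &&
  negb (Nat.eqb (nth (n - 1) a 0%nat) 0%nat) &&
  negb (has_zero_run k (firstn (n - 2 - k) (skipn (k + 1) a))).

Definition C1k (n q k : nat) : nat :=
  length (filter (in_C1 n k) (words q n)).

(* C_1(n,q) = max_{1 <= k < n} |C_1(n,q,k)|  (0 if n <= 1, irrelevant for limits) *)
Definition C1max (n q : nat) : nat :=
  fold_right Nat.max 0%nat (map (C1k n q) (seq 1 (n - 1))).

Definition logq (q : nat) (x : R) : R := ln x / ln (INR q).

Definition Rceil (x : R) : R := - IZR (Int_part (- x)).

Definition Deltan (q n : nat) : R := logq q (INR n) - Rceil (logq q (INR n)).

Definition Fterm (q : nat) (D z : R) : R :=
  D - z - (logq q (exp 1)) * (INR q - 1) * Rpower (INR q) (D - z - 1).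

Definition Fq (q : nat) (D : R) : R :=
  Rmax (Fterm q D (-2)) (Rmax (Fterm q D (-1)) (Fterm q D 0)).

(* A word of C_1(n,q,k) is 0^k, a nonzero letter, a middle block of length L = n-k-2 without
   k consecutive zeros, and a nonzero letter, so |C_1(n,q,k)| = (q-1)^2 A_k(L).  The run-free
   counts satisfy A_k(L+k+1) = q A_k(L+k) - (q-1) A_k(L), and comparing with geometric sequences
   gives A_k(L) = q^L (1 - delta_k)^(L + O(k)) with delta_k = (q-1)/q^(k+1).  Hence, for
   t = n/q^k, (n/q^n) |C_1(n,q,k)| is ((q-1)/q)^2 t e^(-alpha t) (alpha = (q-1)/q) up to a factor
   1 + O(1/k), while small k contribute O(1/n).  With c = ceil(log_q n), the profile t e^(-alpha t)
   increases up to t = 1/alpha and decreases after it, so the maximum over k is attained at one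
   of k = c-2, c-1, c, i.e. at t = q^(Delta_n + 2), q^(Delta_n + 1), q^Delta_n: this is q^F(Delta_n).
   The peak value 1/(alpha e) gives the bound on the constant, reached when q^(Delta + 1) = 1/alpha. *)

From Stdlib Require Import Reals Lra Lia Arith List Bool.
Import ListNotations.

Local Open Scope nat_scope.

(** * Counting words block by block *)

Lemma list_sum_cons x l : list_sum (x :: l) = x + list_sum l.
Proof. reflexivity. Qed.

Lemma list_sum_map_mul_r (f : nat -> nat) c l :
  list_sum (map (fun d => f d * c) l) = list_sum (map f l) * c.
Proof. induction l as [|d l IH]; [reflexivity|]. cbn [map]. rewrite !list_sum_cons, IH; lia. Qed.

Definition count_sat (P : list nat -> bool) (W : list (list nat)) : nat :=
  length (filter P W).

Lemma count_sat_ext_in P1 P2 W :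
  (forall w, In w W -> P1 w = P2 w) -> count_sat P1 W = count_sat P2 W.
Proof. intros H; unfold count_sat; now rewrite (filter_ext_in _ _ _ H). Qed.

Lemma count_sat_andb_l (b : bool) P W :
  count_sat (fun w => b && P w) W = if b then count_sat P W else 0.
Proof. destruct b; [reflexivity|]. unfold count_sat; now induction W. Qed.

Lemma count_sat_app P W1 W2 :
  count_sat P (W1 ++ W2) = count_sat P W1 + count_sat P W2.
Proof. unfold count_sat; now rewrite filter_app, length_app. Qed.

Lemma count_sat_map_cons P d W :
  count_sat P (map (cons d) W) = count_sat (fun w => P (d :: w)) W.
Proof.
  unfold count_sat; induction W as [|w W IH]; cbn; [reflexivity|].
  destruct (P (d :: w)); cbn; auto.
Qed.

Lemma count_sat_words_S P q m :
  count_sat P (words q (S m)) =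
  list_sum (map (fun d => count_sat (fun w => P (d :: w)) (words q m)) (seq 0 q)).
Proof.
  cbn [words]. induction (seq 0 q) as [|d l IH]; [reflexivity|].
  cbn [flat_map map]. now rewrite list_sum_cons, count_sat_app, count_sat_map_cons, IH.
Qed.

Lemma count_sat_words_S_zero P q m : 1 <= q ->
  (forall d w, 0 < d -> P (d :: w) = P (1 :: w)) ->
  count_sat P (words q (S m)) =
  count_sat (fun w => P (0 :: w)) (words q m) +
  (q - 1) * count_sat (fun w => P (1 :: w)) (words q m).
Proof.
  intros Hq HP. rewrite count_sat_words_S. destruct q as [|q]; [lia|].
  change (seq 0 (S q)) with (0 :: seq 1 q). cbn [map]. rewrite list_sum_cons. f_equal.
  replace (S q - 1) with (length (seq 1 q)) by (rewrite length_seq; lia).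
  assert (Hpos : forall d, In d (seq 1 q) -> 0 < d) by (intros d Hd; apply in_seq in Hd; lia).
  induction (seq 1 q) as [|d l IH]; cbn [map length]; [reflexivity|].
  rewrite list_sum_cons, IH by (intros; apply Hpos; now right).
  rewrite (count_sat_ext_in _ (fun w => P (1 :: w))) by (intros; apply HP, Hpos; now left).
  lia.
Qed.

Lemma words_length q m w : In w (words q m) -> length w = m.
Proof.
  revert w; induction m as [|m IH]; cbn; intros w H.
  - now destruct H as [<-|[]].
  - apply in_flat_map in H as [d [_ H]]. apply in_map_iff in H as [w' [<- H]].
    cbn; f_equal; auto.
Qed.

Lemma count_sat_words_add q a b (P P1 P2 : list nat -> bool) :
  (forall l1 l2, length l1 = a -> length l2 = b -> P (l1 ++ l2) = P1 l1 && P2 l2) ->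
  count_sat P (words q (a + b)) = count_sat P1 (words q a) * count_sat P2 (words q b).
Proof.
  revert P P1; induction a as [|a IH]; intros P P1 HP.
  - rewrite (count_sat_ext_in P (fun w => P1 [] && P2 w))
      by (intros w Hw; apply (HP []); eauto using words_length).
    rewrite count_sat_andb_l. change (words q 0) with [[] : list nat].
    unfold count_sat at 2; cbn [filter]. destruct (P1 []); cbn [length Nat.add]; lia.
  - rewrite Nat.add_succ_l, !count_sat_words_S, <- list_sum_map_mul_r.
    f_equal. apply map_ext. intros d. apply IH.
    intros l1 l2 H1 H2. apply (HP (d :: l1) l2); cbn; auto.
Qed.

Definition all_zero (k : nat) (l : list nat) : bool :=
  forallb (fun i => Nat.eqb (nth i l 0) 0) (seq 0 k).

Definition head_nonzero (l : list nat) : bool := negb (Nat.eqb (nth 0 l 0) 0).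

Lemma forallb_seq_S (f : nat -> bool) a n :
  forallb f (seq (S a) n) = forallb (fun i => f (S i)) (seq a n).
Proof. revert a; induction n as [|n IH]; intros a; cbn; [reflexivity|]. now rewrite IH. Qed.

Lemma count_sat_all_zero q k : 1 <= q -> count_sat (all_zero k) (words q k) = 1.
Proof.
  intros Hq. induction k as [|k IH]; [reflexivity|].
  rewrite count_sat_words_S_zero by first [assumption | intros [|d] w Hd; [lia|reflexivity]].
  replace (count_sat (fun w => all_zero (S k) (1 :: w)) (words q k)) with 0
    by (clear IH; unfold count_sat; induction (words q k); cbn; auto).
  rewrite Nat.mul_0_r, Nat.add_0_r, <- IH.
  apply count_sat_ext_in. intros w _. unfold all_zero. cbn [seq forallb].
  now rewrite forallb_seq_S.
Qed.

Lemma count_sat_head_nonzero q : 1 <= q -> count_sat head_nonzero (words q 1) = q - 1.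
Proof.
  intros Hq. rewrite count_sat_words_S_zero by first [assumption | intros [|d] w Hd; [lia|reflexivity]].
  cbn; lia.
Qed.

(** * Words without runs of zeros *)

Definition zero_run_at (k : nat) (s : list nat) (i : nat) : Prop :=
  i + k <= length s /\ forall j, j < k -> nth (i + j) s 1 = 0.

Lemma has_zero_run_spec k s : 1 <= k ->
  has_zero_run k s = true <-> exists i, zero_run_at k s i.
Proof.
  intros Hk. unfold has_zero_run, zero_run_at. rewrite existsb_exists. split.
  - intros [i [_ H]]. apply andb_true_iff in H as [H1 H2].
    rewrite forallb_forall in H2. exists i. split; [now apply Nat.leb_le|].
    intros j Hj. apply Nat.eqb_eq, H2, in_seq. lia.
  - intros [i [H1 H2]]. exists i. split; [apply in_seq; lia|].
    apply andb_true_iff; split; [now apply Nat.leb_le|].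
    apply forallb_forall. intros j Hj. apply in_seq in Hj. apply Nat.eqb_eq, H2. lia.
Qed.

(* [r] is the number of zeros just read; see [avoid_run_spec]. *)
Fixpoint avoid_run (k : nat) (s : list nat) (r : nat) : bool :=
  match s with
  | [] => true
  | x :: s' => if Nat.eqb x 0 then Nat.ltb (S r) k && avoid_run k s' (S r)
               else avoid_run k s' 0
  end.

Lemma repeat_zero_app_cons r s : repeat 0 r ++ 0 :: s = repeat 0 (S r) ++ s.
Proof. induction r as [|r IH]; cbn; [reflexivity|]. now rewrite IH. Qed.

Lemma avoid_run_spec k s r : r < k ->
  avoid_run k s r = false <-> exists i, zero_run_at k (repeat 0 r ++ s) i.
Proof.
  unfold zero_run_at. rewrite length_app, repeat_length.
  revert r; induction s as [|x s IH]; intros r Hr; cbn [avoid_run].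
  - split; [discriminate|]. intros [i [H _]]; cbn in H; lia.
  - destruct (Nat.eqb_spec x 0) as [->|Hx].
    + rewrite repeat_zero_app_cons. cbn [length].
      destruct (Nat.ltb_spec (S r) k) as [Hl|Hl].
      * cbn [andb]. rewrite IH by assumption.
        replace (S r + length s) with (r + S (length s)) by lia. reflexivity.
      * cbn [andb]. split; [intros _|reflexivity]. exists 0. split; [lia|].
        intros j Hj. rewrite app_nth1 by (rewrite repeat_length; lia).
        rewrite (nth_indep _ _ 0) by (rewrite repeat_length; lia). apply nth_repeat.
    + rewrite IH by lia. cbn [length]. split.
      * intros [i [H1 H2]]. exists (i + r + 1). split; [lia|].
        intros j Hj. rewrite app_nth2; rewrite repeat_length; [|lia].
        replace (i + r + 1 + j - r) with (S (i + j)) by lia. apply H2, Hj.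
      * intros [i [H1 H2]]. destruct (Nat.le_gt_cases i r) as [Hir|Hir].
        -- specialize (H2 (r - i) ltac:(lia)).
           rewrite app_nth2, repeat_length in H2 by (rewrite repeat_length; lia).
           replace (i + (r - i) - r) with 0 in H2 by lia. contradiction.
        -- exists (i - r - 1). split; [lia|]. intros j Hj. specialize (H2 j Hj).
           rewrite app_nth2, repeat_length in H2 by (rewrite repeat_length; lia).
           now replace (i + j - r) with (S (i - r - 1 + j)) in H2 by lia.
Qed.

Lemma has_zero_run_avoid_run k s : 1 <= k -> has_zero_run k s = negb (avoid_run k s 0).
Proof.
  intros Hk. apply eq_true_iff_eq. rewrite has_zero_run_spec, negb_true_iff by assumption.
  now rewrite (avoid_run_spec k s 0) by lia.
Qed.

Definition runfree_from (q k r L : nat) : nat :=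
  count_sat (fun w => avoid_run k w r) (words q L).

Definition runfree (q k L : nat) : nat := runfree_from q k 0 L.

Lemma runfree_from_S q k r L : 1 <= q ->
  runfree_from q k r (S L) =
  (if Nat.ltb (S r) k then runfree_from q k (S r) L else 0) + (q - 1) * runfree q k L.
Proof.
  intros Hq. unfold runfree, runfree_from.
  rewrite count_sat_words_S_zero by first [assumption | intros [|d] w Hd; [lia|reflexivity]].
  cbn [avoid_run Nat.eqb]. now rewrite count_sat_andb_l.
Qed.

Lemma runfree_from_short q k : 1 <= q -> forall L r, r + L < k -> runfree_from q k r L = q ^ L.
Proof.
  intros Hq L. induction L as [|L IH]; intros r H; [reflexivity|].
  rewrite runfree_from_S by assumption. destruct (Nat.ltb_spec (S r) k); [|lia].
  unfold runfree. rewrite (IH (S r)), (IH 0) by lia. cbn. nia.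
Qed.

Lemma runfree_from_full q k : 1 <= q ->
  forall L r, 1 <= L -> r + L = k -> runfree_from q k r L + 1 = q ^ L.
Proof.
  intros Hq L. induction L as [|L IH]; intros r H1 H; [lia|].
  rewrite runfree_from_S by assumption. unfold runfree.
  rewrite (runfree_from_short q k Hq L 0) by lia.
  destruct (Nat.ltb_spec (S r) k).
  - specialize (IH (S r) ltac:(lia) ltac:(lia)). cbn. nia.
  - assert (L = 0) by lia. subst. cbn. lia.
Qed.

Lemma runfree_short q k L : 1 <= q -> L < k -> runfree q k L = q ^ L.
Proof. intros; now apply runfree_from_short. Qed.

Lemma runfree_full q k : 1 <= q -> 1 <= k -> runfree q k k + 1 = q ^ k.
Proof. intros; now apply runfree_from_full. Qed.

Lemma runfree_from_shift q k : 1 <= q -> forall m, 1 <= m <= k -> forall P,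
  runfree_from q k (k - m) (P + m + 1) + (q - 1) * runfree q k P =
  runfree_from q k (k - m) (P + m) + (q - 1) * runfree q k (P + m).
Proof.
  intros Hq m. induction m as [|m IH]; intros Hm P; [lia|].
  destruct (Nat.eq_dec m 0) as [->|Hm0].
  - assert (Hlast : forall X, runfree_from q k (k - 1) (S X) = (q - 1) * runfree q k X).
    { intros X. rewrite runfree_from_S by assumption.
      replace (S (k - 1)) with k by lia. now rewrite Nat.ltb_irrefl. }
    replace (P + 1 + 1) with (S (P + 1)) by lia. rewrite Hlast.
    replace (P + 1) with (S P) by lia. rewrite Hlast. lia.
  - replace (P + S m + 1) with (S (P + m + 1)) by lia.
    replace (P + S m) with (S (P + m)) by lia. rewrite !runfree_from_S by assumption.
    replace (S (k - S m)) with (k - m) by lia.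
    destruct (Nat.ltb_spec (k - m) k); [|lia].
    specialize (IH ltac:(lia) P). unfold runfree in *.
    replace (S (P + m)) with (P + m + 1) by lia. lia.
Qed.

Lemma runfree_rec q k P : 1 <= q -> 1 <= k ->
  runfree q k (P + k + 1) + (q - 1) * runfree q k P = q * runfree q k (P + k).
Proof.
  intros Hq Hk. pose proof (runfree_from_shift q k Hq k ltac:(lia) P) as H.
  rewrite Nat.sub_diag in H. unfold runfree in *. nia.
Qed.

(** * The words of C_1(n,q,k) *)

Lemma forallb_ext_in (f g : nat -> bool) l :
  (forall x, In x l -> f x = g x) -> forallb f l = forallb g l.
Proof.
  induction l as [|x l IH]; cbn; intros H; [reflexivity|].
  rewrite H, IH by auto. reflexivity.
Qed.

Lemma forallb_prefix_app k l1 l2 : length l1 = k ->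
  forallb (fun i => Nat.eqb (nth i (l1 ++ l2) 0) 0) (seq 0 k) = all_zero k l1.
Proof.
  intros H. apply forallb_ext_in. intros i Hi. apply in_seq in Hi.
  rewrite app_nth1 by lia. reflexivity.
Qed.

Lemma in_C1_split n k L l1 d r : length l1 = k -> length r = S L -> n = k + L + 2 ->
  in_C1 n k (l1 ++ d :: r) =
  all_zero k l1 && negb (Nat.eqb d 0) &&
  negb (has_zero_run k (firstn L r)) && negb (Nat.eqb (nth L r 0) 0).
Proof.
  intros H1 H2 Hn. unfold in_C1. rewrite forallb_prefix_app by assumption.
  rewrite <- H1, nth_middle.
  replace (n - 1) with (length l1 + S L) by lia. rewrite app_nth2_plus.
  replace (l1 ++ d :: r) with ((l1 ++ [d]) ++ r) by now rewrite <- app_assoc.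
  replace (length l1 + 1) with (length (l1 ++ [d])) by (rewrite length_app; reflexivity).
  rewrite skipn_app, skipn_all, Nat.sub_diag. cbn [app skipn].
  replace (n - 2 - length l1) with L by lia. cbn [nth].
  destruct (all_zero _ l1), (Nat.eqb d 0), (has_zero_run _ _), (Nat.eqb (nth L r 0) 0); reflexivity.
Qed.

Lemma in_C1_last k l1 e : length l1 = k ->
  in_C1 (k + 1) k (l1 ++ [e]) = all_zero k l1 && negb (Nat.eqb e 0).
Proof.
  intros H1. unfold in_C1. rewrite forallb_prefix_app by assumption.
  replace (k + 1 - 1) with k by lia. replace (k + 1 - 2 - k) with 0 by lia.
  rewrite <- H1, nth_middle. cbn [firstn has_zero_run length seq existsb].
  destruct (all_zero _ l1), (Nat.eqb e 0); reflexivity.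
Qed.

Lemma C1k_runfree n q k L : 1 <= q -> 1 <= k -> n = k + L + 2 ->
  C1k n q k = (q - 1) * (q - 1) * runfree q k L.
Proof.
  intros Hq Hk Hn. unfold C1k. fold (count_sat (in_C1 n k) (words q n)).
  replace n with (k + (1 + (L + 1))) by lia.
  set (Pend := fun r : list nat => negb (has_zero_run k (firstn L r)) && head_nonzero [nth L r 0]).
  set (Prest := fun r : list nat => head_nonzero r && Pend (tl r)).
  rewrite (count_sat_words_add q k _ _ (all_zero k) Prest); cycle 1.
  { intros l1 [|d r] H1 H2; cbn in H2; [lia|]. rewrite (in_C1_split _ k L) by lia.
    unfold Prest, Pend, head_nonzero. cbn [tl nth]. now rewrite !andb_assoc. }
  rewrite (count_sat_words_add q 1 _ Prest head_nonzero Pend); cycle 1.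
  { intros [|d [|]] l2 H1 H2; cbn in H1; [lia|reflexivity|lia]. }
  rewrite (count_sat_words_add q L 1 Pend (fun m => negb (has_zero_run k m)) head_nonzero); cycle 1.
  { intros l1 [|e [|]] H1 H2; cbn in H2; try lia. unfold Pend.
    now rewrite <- H1, firstn_app, Nat.sub_diag, firstn_O, app_nil_r, firstn_all, nth_middle. }
  rewrite count_sat_all_zero, !count_sat_head_nonzero by assumption.
  replace (count_sat (fun m => negb (has_zero_run k m)) (words q L)) with (runfree q k L); [lia|].
  apply count_sat_ext_in. intros w _. rewrite has_zero_run_avoid_run by assumption.
  now rewrite negb_involutive.
Qed.

Lemma C1k_last n q k : 1 <= q -> 1 <= k -> n = k + 1 -> C1k n q k = q - 1.
Proof.
  intros Hq Hk ->. unfold C1k. fold (count_sat (in_C1 (k + 1) k) (words q (k + 1))).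
  rewrite (count_sat_words_add q k 1 _ (all_zero k) head_nonzero); cycle 1.
  { intros l1 [|e [|]] H1 H2; cbn in H2; try lia. now rewrite in_C1_last. }
  rewrite count_sat_all_zero, count_sat_head_nonzero by assumption. lia.
Qed.

Lemma fold_max_ge (l : list nat) y : In y l -> y <= fold_right Nat.max 0 l.
Proof.
  induction l as [|x l IH]; cbn; intros H; [contradiction|].
  destruct H as [->|H]; [lia|]. specialize (IH H). lia.
Qed.

Lemma fold_max_attained (l : list nat) :
  fold_right Nat.max 0 l = 0 \/ In (fold_right Nat.max 0 l) l.
Proof.
  induction l as [|x l IH]; cbn; [now left|].
  destruct (Nat.max_spec x (fold_right Nat.max 0 l)) as [[_ ->]|[_ ->]]; [|auto].
  destruct IH; auto.
Qed.

Lemma C1k_le_C1max n q k : 1 <= k -> k + 1 <= n -> C1k n q k <= C1max n q.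
Proof. intros. apply fold_max_ge, in_map, in_seq. lia. Qed.

Lemma C1max_attained n q :
  C1max n q = 0 \/ exists k, 1 <= k /\ k + 1 <= n /\ C1max n q = C1k n q k.
Proof.
  unfold C1max. destruct (fold_max_attained (map (C1k n q) (seq 1 (n - 1)))) as [H|H]; [auto|].
  right. apply in_map_iff in H as [k [E H]]. apply in_seq in H. exists k. split; [lia|split; [lia|auto]].
Qed.

(** * Estimates for run-free counts *)

Local Open Scope R_scope.

Lemma pow_le_one_le x n : 0 <= x <= 1 -> x ^ n <= 1.
Proof. intros H. rewrite <- (pow1 n). apply pow_incr. lra. Qed.

Lemma pow_decr_le x m n : 0 <= x <= 1 -> (m <= n)%nat -> x ^ n <= x ^ m.
Proof.
  intros H Hmn. replace n with (m + (n - m))%nat by lia. rewrite pow_add.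
  pose proof (pow_le x m ltac:(lra)). pose proof (pow_le_one_le x (n - m) H). nra.
Qed.

Lemma bernoulli_one_sub x n : 0 <= x <= 1 -> 1 - INR n * x <= (1 - x) ^ n.
Proof.
  intros H. induction n as [|n IH]; cbn [pow]; [cbn; lra|].
  rewrite S_INR. pose proof (pow_le (1 - x) n ltac:(lra)). pose proof (pos_INR n). nra.
Qed.

Lemma exp_pow_INR x n : exp x ^ n = exp (INR n * x).
Proof.
  induction n as [|n IH]; cbn [pow]; [now rewrite Rmult_0_l, exp_0|].
  rewrite S_INR, IH, <- exp_plus. f_equal. ring.
Qed.

Lemma pow_one_sub_le_exp d n : 0 <= d <= 1 -> (1 - d) ^ n <= exp (- (INR n * d)).
Proof.
  intros Hd. replace (- (INR n * d)) with (INR n * - d) by ring. rewrite <- exp_pow_INR.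
  apply pow_incr. pose proof (exp_ineq1_le (- d)). lra.
Qed.

Lemma INR_ge_2 n : (2 <= n)%nat -> 2 <= INR n.
Proof. apply (le_INR 2). Qed.

Section RunfreeBounds.

Variables q k : nat.
Hypothesis Hq : (2 <= q)%nat.
Hypothesis Hk : (1 <= k)%nat.

Local Notation Q := (INR q).
Local Notation A L := (INR (runfree q k L)).

Let Q_ge_2 : 2 <= Q := INR_ge_2 q Hq.

Let q_ge_1 : (1 <= q)%nat.
Proof. lia. Qed.

Lemma INR_runfree_short L : (L < k)%nat -> A L = Q ^ L.
Proof. intros; now rewrite runfree_short, pow_INR. Qed.

Lemma INR_runfree_full : A k = Q ^ k - 1.
Proof.
  pose proof (runfree_full q k q_ge_1 Hk) as H.
  rewrite <- pow_INR, <- H, plus_INR. cbn. lra.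
Qed.

Lemma INR_runfree_rec P : A (P + k + 1) = Q * A (P + k) - (Q - 1) * A P.
Proof.
  pose proof (runfree_rec q k P q_ge_1 Hk) as H. apply (f_equal INR) in H.
  rewrite plus_INR, !mult_INR, minus_INR in H by assumption. cbn in H. lra.
Qed.

Lemma runfree_S_le L : A (S L) <= Q * A L.
Proof.
  destruct (Nat.lt_ge_cases (S L) k).
  - rewrite !INR_runfree_short by lia. cbn. lra.
  - destruct (Nat.eq_dec (S L) k) as [E|E].
    + rewrite E, INR_runfree_full, INR_runfree_short by lia.
      replace k with (S L) by assumption. cbn. lra.
    + replace (S L) with ((L - k) + k + 1)%nat by lia. rewrite INR_runfree_rec.
      replace (L - k + k)%nat with L by lia. pose proof (pos_INR (runfree q k (L - k))). nra.
Qed.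

Lemma runfree_add_le P m : A (P + m) <= Q ^ m * A P.
Proof.
  induction m as [|m IH]; [rewrite Nat.add_0_r; cbn; lra|].
  replace (P + S m)%nat with (S (P + m)) by lia. pose proof (runfree_S_le (P + m)).
  cbn [pow]. pose proof (pow_le Q m ltac:(lra)). nra.
Qed.

Lemma runfree_le_pow L : A L <= Q ^ L.
Proof.
  pose proof (runfree_add_le 0 L) as H.
  change (runfree q k 0) with 1%nat in H. cbn [INR Nat.add] in H. lra.
Qed.

Definition delta : R := (Q - 1) / Q ^ S k.

Lemma delta_mul_pow : delta * Q ^ S k = Q - 1.
Proof. unfold delta. field. apply pow_nonzero. lra. Qed.

Lemma delta_pos : 0 < delta.
Proof. unfold delta. apply Rdiv_lt_0_compat; [lra|]. apply pow_lt. lra. Qed.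

Lemma delta_le_quarter : 4 * delta <= 1.
Proof.
  pose proof delta_mul_pow as H. pose proof (pow_lt Q (S k) ltac:(lra)).
  assert (Q ^ 2 <= Q ^ S k) by (apply Rle_pow; lia || lra). cbn in *. nra.
Qed.

Lemma delta_le_inv_pow : delta <= / Q ^ k.
Proof.
  pose proof delta_mul_pow as H. pose proof (pow_lt Q k ltac:(lra)). cbn in *.
  apply Rmult_le_reg_r with (Q * Q ^ k); [nra|].
  replace (/ Q ^ k * (Q * Q ^ k)) with Q by (field; lra). lra.
Qed.

(* By induction on [L - k]: the recurrence and [A (P + k) <= Q^k A P] give
   [A (L + 1) <= Q (1 - delta) A L] for [L >= k]. *)
Lemma runfree_upper L : A L * (1 - delta) ^ k <= Q ^ L * (1 - delta) ^ L.
Proof.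
  pose proof delta_pos. pose proof delta_le_quarter.
  assert (Hd : 0 <= 1 - delta <= 1) by lra.
  destruct (Nat.le_gt_cases L k).
  - apply Rmult_le_compat; [apply pos_INR|apply pow_le; lra|apply runfree_le_pow|].
    apply pow_decr_le; assumption.
  - replace L with (k + (L - k))%nat by lia. generalize (L - k)%nat as P. intros P.
    assert (Hmain : A (k + P) <= Q ^ k * (Q * (1 - delta)) ^ P).
    { induction P as [|P IH].
      - rewrite Nat.add_0_r. pose proof (runfree_le_pow k). cbn. lra.
      - replace (k + S P)%nat with (P + k + 1)%nat by lia. rewrite INR_runfree_rec.
        replace (P + k)%nat with (k + P)%nat by lia.
        pose proof (runfree_add_le P k) as Hit. rewrite Nat.add_comm in Hit.
        pose proof (pow_lt Q k ltac:(lra)). pose proof delta_mul_pow as Hde. cbn in Hde.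
        assert (E : Q * delta * A (k + P) <= (Q - 1) * A P).
        { rewrite <- Hde.
          replace (delta * (Q * Q ^ k) * A P) with ((Q * delta) * (Q ^ k * A P)) by ring.
          apply Rmult_le_compat_l; [nra|lra]. }
        apply Rle_trans with ((Q * (1 - delta)) * A (k + P)); [lra|].
        apply Rle_trans with ((Q * (1 - delta)) * (Q ^ k * (Q * (1 - delta)) ^ P)).
        + apply Rmult_le_compat_l; [apply Rmult_le_pos; lra|assumption].
        + right. cbn [pow]. ring. }
    rewrite Rpow_mult_distr in Hmain. rewrite !pow_add.
    pose proof (pow_le (1 - delta) k ltac:(lra)).
    apply Rle_trans with (Q ^ k * Q ^ P * (1 - delta) ^ P * (1 - delta) ^ k);
      [apply Rmult_le_compat_r; lra | right; ring].
Qed.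

Lemma runfree_iter_ge P m c : 0 <= c ->
  (forall j, (P <= j < P + m)%nat -> c * A j <= A (S j)) ->
  c ^ m * A P <= A (P + m).
Proof.
  intros Hc. induction m as [|m IH]; intros H; [rewrite Nat.add_0_r; cbn; lra|].
  replace (P + S m)%nat with (S (P + m)) by lia.
  assert (IHm : c ^ m * A P <= A (P + m)) by (apply IH; intros; apply H; lia).
  apply Rle_trans with (c * A (P + m)); [|apply H; lia].
  cbn [pow]. rewrite Rmult_assoc. apply Rmult_le_compat_l; assumption.
Qed.

Section Lower.

Hypothesis k_delta_small : 4 * INR k * delta <= 1.

(* Strong induction: in [A (P+k+1) = Q A (P+k) - (Q-1) A P] the induction hypothesis gives
   [A (P+k) >= (Q (1 - 2 delta))^k A P >= Q^k A P / 2], so the subtracted term is at most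
   [2 delta Q A (P+k)]. *)
Lemma runfree_S_ge_coarse L : Q * (1 - 2 * delta) * A L <= A (S L).
Proof.
  pose proof delta_pos as Hd0. pose proof delta_le_quarter as Hd1.
  pose proof delta_mul_pow as Hde. cbn in Hde. pose proof (pow_lt Q k ltac:(lra)).
  revert L. induction L as [L IH] using lt_wf_ind.
  destruct (Nat.lt_ge_cases (S L) k).
  - rewrite !INR_runfree_short by lia. cbn. pose proof (pow_le Q L ltac:(lra)). nra.
  - destruct (Nat.eq_dec (S L) k) as [E|E].
    + rewrite E, INR_runfree_full, INR_runfree_short by lia.
      rewrite <- E in Hde |- *. cbn [pow] in *. pose proof (pow_le Q L ltac:(lra)). nra.
    + set (P := (L - k)%nat). replace (S L) with (P + k + 1)%nat by (unfold P; lia).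
      replace L with (P + k)%nat by (unfold P; lia). rewrite INR_runfree_rec.
      assert (Hit : (Q * (1 - 2 * delta)) ^ k * A P <= A (P + k)).
      { apply runfree_iter_ge; [apply Rmult_le_pos; lra|]. intros j Hj. apply IH. unfold P in *. lia. }
      rewrite Rpow_mult_distr in Hit.
      pose proof (bernoulli_one_sub (2 * delta) k ltac:(lra)).
      assert (Hb : (1 - 2 * delta) ^ k >= 1/2) by nra.
      pose proof (pos_INR (runfree q k P)). pose proof (pos_INR (runfree q k (P + k))).
      assert (E2 : (Q - 1) * A P <= 2 * delta * Q * A (P + k)).
      { rewrite <- Hde.
        apply Rle_trans with ((delta * Q) * (2 * (1 - 2 * delta) ^ k * (Q ^ k * A P))).
        - replace (delta * (Q * Q ^ k) * A P) with ((delta * Q) * (1 * (Q ^ k * A P))) by ring.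
          apply Rmult_le_compat_l; [nra|]. apply Rmult_le_compat_r; nra.
        - replace (2 * delta * Q * A (P + k)) with ((delta * Q) * (2 * A (P + k))) by ring.
          apply Rmult_le_compat_l; nra. }
      lra.
Qed.

Definition epsilon : R := delta / (1 - 2 * INR k * delta).

Lemma runfree_S_ge_fine P : Q * (1 - epsilon) * A (P + k) <= A (P + k + 1).
Proof.
  pose proof delta_pos as Hd0. pose proof delta_le_quarter as Hd1.
  pose proof delta_mul_pow as Hde. cbn in Hde. pose proof (pow_lt Q k ltac:(lra)).
  rewrite INR_runfree_rec.
  assert (Hit : (Q * (1 - 2 * delta)) ^ k * A P <= A (P + k)).
  { apply runfree_iter_ge; [apply Rmult_le_pos; lra|]. intros j _. apply runfree_S_ge_coarse. }
  rewrite Rpow_mult_distr in Hit.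
  pose proof (bernoulli_one_sub (2 * delta) k ltac:(lra)) as Hb.
  pose proof (pos_INR (runfree q k P)). pose proof (pos_INR (runfree q k (P + k))).
  set (u := 1 - 2 * INR k * delta) in *.
  assert (Hu : u >= 1/2) by (unfold u; lra).
  assert (Hlow : Q ^ k * u * A P <= A (P + k)).
  { apply Rle_trans with (Q ^ k * (1 - 2 * delta) ^ k * A P); [|assumption].
    apply Rmult_le_compat_r; [assumption|]. apply Rmult_le_compat_l; [lra|]. unfold u; lra. }
  assert (E2 : (Q - 1) * A P * u <= delta * Q * A (P + k)).
  { rewrite <- Hde.
    replace (delta * (Q * Q ^ k) * A P * u) with ((delta * Q) * (Q ^ k * u * A P)) by ring.
    apply Rmult_le_compat_l; nra. }
  unfold epsilon. fold u.
  assert (E3 : (Q - 1) * A P <= Q * (delta / u) * A (P + k)).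
  { apply Rmult_le_reg_r with u; [lra|].
    replace (Q * (delta / u) * A (P + k) * u) with (delta * Q * A (P + k)) by (field; lra).
    assumption. }
  lra.
Qed.

Lemma epsilon_bounds : 0 <= epsilon < 1.
Proof.
  pose proof delta_pos. pose proof delta_le_quarter.
  assert (1 <= INR k) by (apply (le_INR 1); assumption).
  unfold epsilon. split.
  - apply Rmult_le_pos; [lra|]. apply Rlt_le, Rinv_0_lt_compat. lra.
  - apply Rmult_lt_reg_r with (1 - 2 * INR k * delta); [lra|].
    unfold Rdiv. rewrite Rmult_assoc, Rinv_l by lra. nra.
Qed.

Lemma runfree_lower P : (Q ^ k - 1) * (Q * (1 - epsilon)) ^ P <= A (k + P).
Proof.
  pose proof epsilon_bounds.
  induction P as [|P IH]; [rewrite Nat.add_0_r, INR_runfree_full; cbn; lra|].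
  replace (k + S P)%nat with (P + k + 1)%nat by lia.
  apply Rle_trans with (Q * (1 - epsilon) * A (P + k)); [|apply runfree_S_ge_fine].
  rewrite Nat.add_comm.
  apply Rle_trans with ((Q * (1 - epsilon)) * ((Q ^ k - 1) * (Q * (1 - epsilon)) ^ P)).
  - right. cbn [pow]. ring.
  - apply Rmult_le_compat_l; [apply Rmult_le_pos; lra|assumption].
Qed.

End Lower.

End RunfreeBounds.

(** * The profile t exp(-alpha t) *)

Lemma exp_le_compat x y : x <= y -> exp x <= exp y.
Proof. intros [H|H]; [now apply Rlt_le, exp_increasing|subst; lra]. Qed.

Lemma Rpower_Rmax b x y : 1 < b -> Rpower b (Rmax x y) = Rmax (Rpower b x) (Rpower b y).
Proof.
  intros Hb. unfold Rmax.
  destruct (Rle_dec x y) as [H|H], (Rle_dec (Rpower b x) (Rpower b y)) as [H'|H']; auto.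
  - exfalso. apply H'. apply Rle_Rpower; lra.
  - apply Rnot_le_lt in H. pose proof (Rpower_lt b y x Hb H). lra.
Qed.

Section Profile.

Variable q : nat.
Hypothesis Hq : (2 <= q)%nat.

Local Notation Q := (INR q).

Let Q_ge_2 : 2 <= Q := INR_ge_2 q Hq.

Definition alpha : R := (Q - 1) / Q.

Definition profile (t : R) : R := t * exp (- alpha * t).

Lemma alpha_mul : alpha * Q = Q - 1.
Proof. unfold alpha. field. lra. Qed.

Lemma alpha_bounds : 1/2 <= alpha < 1.
Proof. pose proof alpha_mul. split; nra. Qed.

Lemma Rpower_Fterm D z : Rpower Q (Fterm q D z) = profile (Rpower Q (D - z)).
Proof.
  assert (Hl : 0 < ln Q) by (rewrite <- ln_1; apply ln_increasing; lra).
  unfold Fterm, logq, profile. rewrite ln_exp.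
  replace (Rpower Q (D - z - 1)) with (Rpower Q (D - z) / Q).
  2:{ replace (D - z - 1) with ((D - z) + - (1)) by ring.
      now rewrite Rpower_plus, Rpower_Ropp, Rpower_1 by lra. }
  set (t := Rpower Q (D - z)).
  unfold Rpower at 1.
  replace ((D - z - 1 / ln Q * (Q - 1) * (t / Q)) * ln Q) with ((D - z) * ln Q + - alpha * t)
    by (unfold alpha; field; lra).
  now rewrite exp_plus.
Qed.

Lemma Rpower_Fq D : Rpower Q (Fq q D) =
  Rmax (profile (Rpower Q (D + 2))) (Rmax (profile (Rpower Q (D + 1))) (profile (Rpower Q D))).
Proof.
  unfold Fq. rewrite !Rpower_Rmax, !Rpower_Fterm by lra.
  replace (D - -2) with (D + 2) by ring. replace (D - -1) with (D + 1) by ring.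
  now replace (D - 0) with D by ring.
Qed.

(* [1 + x <= exp x] at [x = alpha t - 1]. *)
Lemma profile_le_max t : profile t <= / (alpha * exp 1).
Proof.
  pose proof alpha_bounds. pose proof (exp_ineq1_le (alpha * t - 1)).
  pose proof (exp_pos (- alpha * t)). pose proof (exp_pos 1).
  assert (E : exp (alpha * t - 1) * exp (- alpha * t) = / exp 1).
  { rewrite <- exp_plus, <- exp_Ropp. f_equal. ring. }
  unfold profile. apply Rmult_le_reg_l with alpha; [lra|].
  apply Rle_trans with (exp (alpha * t - 1) * exp (- alpha * t)).
  - rewrite <- Rmult_assoc. apply Rmult_le_compat_r; lra.
  - rewrite E. right. field. lra.
Qed.

Lemma profile_inv_alpha : profile (/ alpha) = / (alpha * exp 1).
Proof.
  pose proof alpha_bounds. unfold profile.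
  replace (- alpha * / alpha) with (- (1)) by (field; lra).
  now rewrite exp_Ropp, Rinv_mult.
Qed.

Lemma profile_le_increasing s t : 0 <= s <= t -> alpha * t <= 1 -> profile s <= profile t.
Proof.
  intros Hst Ht. pose proof alpha_bounds. unfold profile.
  replace (exp (- alpha * t)) with (exp (- alpha * (t - s)) * exp (- alpha * s))
    by (rewrite <- exp_plus; f_equal; ring).
  pose proof (exp_ineq1_le (- alpha * (t - s))). pose proof (exp_pos (- alpha * s)).
  assert (s <= t * exp (- alpha * (t - s))).
  { apply Rle_trans with (t * (1 + - alpha * (t - s))); [nra|]. apply Rmult_le_compat_l; lra. }
  rewrite <- Rmult_assoc. apply Rmult_le_compat_r; lra.
Qed.

Lemma profile_le_decreasing s t : 1 <= alpha * s -> s <= t -> profile t <= profile s.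
Proof.
  intros Hs Hst. pose proof alpha_bounds. unfold profile.
  replace (exp (- alpha * s)) with (exp (alpha * (t - s)) * exp (- alpha * t))
    by (rewrite <- exp_plus; f_equal; ring).
  pose proof (exp_ineq1_le (alpha * (t - s))). pose proof (exp_pos (- alpha * t)).
  assert (t <= s * exp (alpha * (t - s))).
  { apply Rle_trans with (s * (1 + alpha * (t - s))); [nra|]. apply Rmult_le_compat_l; nra. }
  rewrite <- Rmult_assoc. apply Rmult_le_compat_r; lra.
Qed.

(* [exp (alpha t) >= (1 + alpha t / 2)^2 >= t^2 / 16]. *)
Lemma profile_le_inv t : 0 < t -> profile t <= 16 / t.
Proof.
  intros Ht. pose proof alpha_bounds. unfold profile.
  assert (E : exp (alpha * t) = exp (alpha * t / 2) ^ 2).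
  { rewrite exp_pow_INR. f_equal. cbn. field. }
  pose proof (exp_ineq1_le (alpha * t / 2)). pose proof (exp_pos (alpha * t)).
  assert (Hb : t * t <= 16 * exp (alpha * t)).
  { rewrite E. cbn. assert (t / 4 <= exp (alpha * t / 2)) by nra. nra. }
  replace (- alpha * t) with (- (alpha * t)) by ring. rewrite exp_Ropp.
  apply Rmult_le_reg_r with (t * exp (alpha * t)); [nra|].
  replace (t * / exp (alpha * t) * (t * exp (alpha * t))) with (t * t) by (field; lra).
  replace (16 / t * (t * exp (alpha * t))) with (16 * exp (alpha * t)) by (field; lra).
  assumption.
Qed.

Lemma profile_ge_exp t : 1 <= t <= Q -> exp (- Q) <= profile t.
Proof.
  intros Ht. pose proof alpha_bounds. pose proof alpha_mul. unfold profile.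
  apply Rle_trans with (exp (- alpha * t)); [apply exp_le_compat; nra|].
  pose proof (exp_pos (- alpha * t)). nra.
Qed.

End Profile.

(** * Scaled counts *)

Lemma nat_sq_le_pow2 n : (n * n <= 4 * 2 ^ n)%nat.
Proof.
  induction n as [|n IH]; [cbn; lia|].
  pose proof (Nat.pow_gt_lin_r 2 n ltac:(lia)). cbn. nia.
Qed.

Lemma exp_le_pow_one_sub y m : 0 <= y < 1 -> exp (- (INR m * (y / (1 - y)))) <= (1 - y) ^ m.
Proof.
  intros Hy. replace (- (INR m * (y / (1 - y)))) with (INR m * - (y / (1 - y))) by ring.
  rewrite <- exp_pow_INR. apply pow_incr. split; [apply Rlt_le, exp_pos|].
  rewrite exp_Ropp. pose proof (exp_ineq1_le (y / (1 - y))). pose proof (exp_pos (y / (1 - y))).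
  replace (1 + y / (1 - y)) with (/ (1 - y)) in * by (field; lra).
  apply Rmult_le_reg_r with (exp (y / (1 - y)) * / (1 - y)).
  - apply Rmult_lt_0_compat; [assumption|]. apply Rinv_0_lt_compat. lra.
  - replace (/ exp (y / (1 - y)) * (exp (y / (1 - y)) * / (1 - y))) with (/ (1 - y)) by (field; lra).
    replace ((1 - y) * (exp (y / (1 - y)) * / (1 - y))) with (exp (y / (1 - y))) by (field; lra).
    assumption.
Qed.

Section ScaledCount.

Variable q : nat.
Hypothesis Hq : (2 <= q)%nat.

Local Notation Q := (INR q).

Let Q_ge_2 : 2 <= Q := INR_ge_2 q Hq.

Lemma INR_lt_pow k : INR k < Q ^ k.
Proof.
  apply Rlt_le_trans with (2 ^ k).
  - rewrite <- (pow_INR 2). apply lt_INR, Nat.pow_gt_lin_r. lia.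
  - apply pow_incr. lra.
Qed.

Lemma div_pow_nonneg x k : 0 <= x -> 0 <= x / Q ^ k.
Proof. intros Hx. apply Rmult_le_pos; [assumption|]. apply Rlt_le, Rinv_0_lt_compat, pow_lt. lra. Qed.

Lemma k_delta_le k : (1 <= k)%nat -> INR k * delta q k <= 4 / INR k.
Proof.
  intros Hk. assert (Hk1 : 1 <= INR k) by (apply (le_INR 1); assumption).
  assert (Hsq : INR k * INR k <= 4 * Q ^ k).
  { rewrite <- mult_INR. apply Rle_trans with (INR (4 * 2 ^ k)); [apply le_INR, nat_sq_le_pow2|].
    rewrite mult_INR, pow_INR. replace (INR 4) with 4 by (cbn; ring).
    apply Rmult_le_compat_l; [lra|]. apply pow_incr. cbn; lra. }
  pose proof (delta_le_inv_pow q k Hq) as Hd. pose proof (pow_lt Q k ltac:(lra)).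
  apply Rle_trans with (INR k / Q ^ k); [apply Rmult_le_compat_l; [lra|assumption]|].
  apply Rmult_le_reg_r with (Q ^ k * INR k); [nra|].
  replace (INR k / Q ^ k * (Q ^ k * INR k)) with (INR k * INR k) by (field; lra).
  replace (4 / INR k * (Q ^ k * INR k)) with (4 * Q ^ k) by (field; lra).
  assumption.
Qed.

Lemma n_delta n k : INR n * delta q k = alpha q * (INR n / Q ^ k).
Proof. unfold delta, alpha. cbn [pow]. field. split; [apply pow_nonzero|]; lra. Qed.

Definition scaled_C1k (n k : nat) : R :=
  INR n / Q ^ k * INR (runfree q k (n - k - 2)) / Q ^ (n - k - 2).

Lemma C1k_scaled n k : (1 <= k)%nat -> (k + 2 <= n)%nat ->
  INR (C1k n q k) = Q ^ n / INR n * alpha q ^ 2 * scaled_C1k n k.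
Proof.
  intros Hk Hn. rewrite (C1k_runfree n q k (n - k - 2)) by lia.
  rewrite !mult_INR, minus_INR by lia. cbn [INR].
  assert (E : Q ^ n = Q ^ k * Q ^ (n - k - 2) * Q ^ 2) by (rewrite <- !pow_add; f_equal; lia).
  assert (0 < INR n) by (apply lt_0_INR; lia).
  unfold scaled_C1k, alpha. rewrite E. field. repeat split; try lra; apply pow_nonzero; lra.
Qed.

Lemma scaled_C1k_nonneg n k : 0 <= scaled_C1k n k.
Proof.
  pose proof (pow_lt Q k ltac:(lra)). pose proof (pow_lt Q (n - k - 2) ltac:(lra)).
  unfold scaled_C1k. apply div_pow_nonneg, Rmult_le_pos; apply div_pow_nonneg || apply pos_INR; apply pos_INR.
Qed.

Lemma scaled_C1k_upper n k : (1 <= k)%nat -> (k + 2 <= n)%nat ->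
  scaled_C1k n k * (1 - delta q k) ^ (2 * k + 2) <= profile q (INR n / Q ^ k).
Proof.
  intros Hk Hkn. pose proof (delta_pos q k Hq). pose proof (delta_le_quarter q k Hq Hk).
  set (d := delta q k) in *. set (L := (n - k - 2)%nat). set (t := INR n / Q ^ k).
  assert (Hd : 0 <= 1 - d <= 1) by lra.
  assert (HQL : 0 < Q ^ L) by (apply pow_lt; lra).
  assert (Ht : 0 <= t) by apply div_pow_nonneg, pos_INR.
  assert (Hrun : INR (runfree q k L) * (1 - d) ^ (2 * k + 2) <= Q ^ L * (1 - d) ^ n).
  { replace ((1 - d) ^ n) with ((1 - d) ^ L * (1 - d) ^ (k + 2))
      by (rewrite <- pow_add; f_equal; unfold L; lia).
    replace (2 * k + 2)%nat with (k + (k + 2))%nat by lia. rewrite pow_add, <- !Rmult_assoc.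
    apply Rmult_le_compat_r; [apply pow_le; lra|]. apply runfree_upper; assumption. }
  apply Rle_trans with (t * (1 - d) ^ n).
  - replace (scaled_C1k n k * (1 - d) ^ (2 * k + 2))
      with (t / Q ^ L * (INR (runfree q k L) * (1 - d) ^ (2 * k + 2)))
      by (unfold scaled_C1k, t, L; field; split; apply pow_nonzero; lra).
    apply Rle_trans with (t / Q ^ L * (Q ^ L * (1 - d) ^ n)); [|right; field; lra].
    apply Rmult_le_compat_l; [apply div_pow_nonneg; lra|assumption].
  - unfold profile. apply Rmult_le_compat_l; [assumption|].
    apply Rle_trans with (exp (- (INR n * d))); [apply pow_one_sub_le_exp; lra|].
    unfold d, t. rewrite n_delta. right. f_equal. ring.
Qed.

Lemma scaled_C1k_upper_large n k K : (32 <= K)%nat -> (K <= k)%nat -> (k + 2 <= n)%nat ->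
  scaled_C1k n k <= (1 + 32 / INR K) * profile q (INR n / Q ^ k).
Proof.
  intros HK HKk Hkn. assert (Hk : (1 <= k)%nat) by lia.
  pose proof (delta_pos q k Hq). pose proof (delta_le_quarter q k Hq Hk).
  pose proof (scaled_C1k_upper n k Hk Hkn) as Hc.
  pose proof (bernoulli_one_sub (delta q k) (2 * k + 2) ltac:(lra)) as Hb.
  pose proof (k_delta_le k Hk) as Hkd.
  assert (HKr : 32 <= INR K) by (replace 32 with (INR 32) by (cbn; ring); apply le_INR; assumption).
  assert (HkK : INR K <= INR k) by (apply le_INR; assumption).
  assert (Hy : 4 / INR k <= 4 / INR K) by (apply Rmult_le_compat_l; [lra|apply Rinv_le_contravar; lra]).
  set (y := 16 / INR K).
  assert (Hy1 : 0 <= y <= 1/2).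
  { unfold y. split; [apply Rmult_le_pos; [lra|apply Rlt_le, Rinv_0_lt_compat; lra]|].
    apply Rmult_le_reg_r with (INR K); [lra|]. unfold Rdiv. rewrite Rmult_assoc, Rinv_l by lra. lra. }
  assert (Hw : 1 - y <= (1 - delta q k) ^ (2 * k + 2)).
  { assert (4 * (4 / INR K) = y) by (unfold y; field; lra).
    rewrite plus_INR, mult_INR in Hb. assert (1 <= INR k) by (apply (le_INR 1); assumption).
    replace (INR 2) with 2 in Hb by (cbn; ring). nra. }
  pose proof (scaled_C1k_nonneg n k).
  assert (Hs : scaled_C1k n k * (1 - y) <= profile q (INR n / Q ^ k)).
  { apply Rle_trans with (scaled_C1k n k * (1 - delta q k) ^ (2 * k + 2)); [|assumption].
    apply Rmult_le_compat_l; assumption. }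
  replace (32 / INR K) with (2 * y) by (unfold y; field; lra).
  assert (E : (1 + 2 * y) * (1 - y) >= 1) by nra.
  apply Rle_trans with ((1 + 2 * y) * (scaled_C1k n k * (1 - y))); [nra|].
  apply Rmult_le_compat_l; lra.
Qed.

Lemma scaled_C1k_upper_small n k K : (1 <= k)%nat -> (k < K)%nat -> (k + 2 <= n)%nat ->
  scaled_C1k n k <= 16 * Q ^ K / (INR n * (3 / 4) ^ (2 * K)).
Proof.
  intros Hk HkK Hkn. pose proof (delta_pos q k Hq). pose proof (delta_le_quarter q k Hq Hk).
  pose proof (scaled_C1k_upper n k Hk Hkn) as Hc.
  assert (Hw : (3 / 4) ^ (2 * K) <= (1 - delta q k) ^ (2 * k + 2)).
  { apply Rle_trans with ((3 / 4) ^ (2 * k + 2)); [apply pow_decr_le; [lra|lia]|].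
    apply pow_incr. lra. }
  assert (Hw0 : 0 < (3 / 4) ^ (2 * K)) by (apply pow_lt; lra).
  assert (Hn : 0 < INR n) by (apply lt_0_INR; lia).
  assert (HQk : 0 < Q ^ k) by (apply pow_lt; lra).
  assert (Ht : 0 < INR n / Q ^ k) by (apply Rdiv_lt_0_compat; assumption).
  pose proof (profile_le_inv q Hq _ Ht) as H16.
  pose proof (scaled_C1k_nonneg n k).
  assert (HQK : Q ^ k <= Q ^ K) by (apply Rle_pow; [lra|lia]).
  apply Rmult_le_reg_r with ((3 / 4) ^ (2 * K)); [assumption|].
  apply Rle_trans with (16 / (INR n / Q ^ k)).
  - apply Rle_trans with (scaled_C1k n k * (1 - delta q k) ^ (2 * k + 2)); [|lra].
    apply Rmult_le_compat_l; assumption.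
  - replace (16 / (INR n / Q ^ k)) with (16 * Q ^ k / INR n) by (field; lra).
    replace (16 * Q ^ K / (INR n * (3 / 4) ^ (2 * K)) * (3 / 4) ^ (2 * K))
      with (16 * Q ^ K / INR n) by (field; lra).
    apply Rmult_le_compat_r; [apply Rlt_le, Rinv_0_lt_compat; assumption|lra].
Qed.

Lemma epsilon_odds_le k : (1 <= k)%nat -> INR k * delta q k <= 1/8 ->
  epsilon q k / (1 - epsilon q k) <= delta q k * (1 + 2 * ((2 * INR k + 1) * delta q k)).
Proof.
  intros Hk Hkd. pose proof (delta_pos q k Hq) as Hd.
  set (d := delta q k) in *. set (x := (2 * INR k + 1) * d).
  assert (Hk1 : 1 <= INR k) by (apply (le_INR 1); assumption).
  assert (Hx : 0 <= x <= 1/2) by (unfold x; nra).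
  assert (E : epsilon q k / (1 - epsilon q k) = d / (1 - x))
    by (unfold epsilon, x; fold d; field; split; nra).
  rewrite E. apply Rmult_le_reg_r with (1 - x); [lra|].
  replace (d / (1 - x) * (1 - x)) with d by (field; lra).
  assert (0 <= d * (x * (1 - 2 * x))) by (apply Rmult_le_pos; nra). nra.
Qed.

Lemma scaled_C1k_ge_pow n k : (1 <= k)%nat -> 4 * INR k * delta q k <= 1 -> (2 * k + 2 <= n)%nat ->
  INR n / Q ^ k * (1 - / Q ^ k) * (1 - epsilon q k) ^ (n - 2 * k - 2) <= scaled_C1k n k.
Proof.
  intros Hk Hkd Hn. set (P := (n - 2 * k - 2)%nat).
  pose proof (runfree_lower q k Hq Hk Hkd P) as HA.
  pose proof (epsilon_bounds q k Hq Hk Hkd).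
  assert (HQk : 0 < Q ^ k) by (apply pow_lt; lra).
  assert (Ht : 0 <= INR n / Q ^ k) by apply div_pow_nonneg, pos_INR.
  unfold scaled_C1k. replace (n - k - 2)%nat with (k + P)%nat by (unfold P; lia).
  apply Rle_trans with (INR n / Q ^ k * ((Q ^ k - 1) * (Q * (1 - epsilon q k)) ^ P) / Q ^ (k + P)).
  - right. rewrite Rpow_mult_distr, pow_add. field. split; apply pow_nonzero; lra.
  - apply Rmult_le_compat_r; [apply Rlt_le, Rinv_0_lt_compat, pow_lt; lra|].
    apply Rmult_le_compat_l; assumption.
Qed.

Lemma one_sub_epsilon_pow_ge n k m : (1 <= k)%nat -> INR k * delta q k <= 1/8 -> (m <= n)%nat ->
  exp (- (INR n * delta q k * (1 + 2 * ((2 * INR k + 1) * delta q k)))) <= (1 - epsilon q k) ^ m.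
Proof.
  intros Hk Hkd Hmn. pose proof (delta_pos q k Hq).
  pose proof (epsilon_bounds q k Hq Hk ltac:(rewrite Rmult_assoc; lra)).
  pose proof (epsilon_odds_le k Hk Hkd). pose proof (pos_INR n).
  apply Rle_trans with ((1 - epsilon q k) ^ n); [|apply pow_decr_le; [lra|assumption]].
  apply Rle_trans with (exp (- (INR n * (epsilon q k / (1 - epsilon q k)))));
    [|apply exp_le_pow_one_sub; lra].
  apply exp_le_compat. rewrite Rmult_assoc. apply Ropp_le_contravar, Rmult_le_compat_l; assumption.
Qed.

Lemma scaled_C1k_lower n k K : (32 <= K)%nat -> (K <= k)%nat -> (2 * k + 2 <= n)%nat ->
  INR n / Q ^ k <= Q ^ 2 ->
  (1 - (1 + 24 * Q ^ 2) / INR K) * profile q (INR n / Q ^ k) <= scaled_C1k n k.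
Proof.
  intros HK HKk Hn Ht2. assert (Hk : (1 <= k)%nat) by lia.
  pose proof (delta_pos q k Hq). pose proof (alpha_bounds q Hq).
  assert (HKr : 32 <= INR K) by (replace 32 with (INR 32) by (cbn; ring); apply le_INR; assumption).
  assert (Hk1 : 1 <= INR k) by (apply (le_INR 1); assumption).
  assert (Hkd : INR k * delta q k <= 4 / INR K).
  { apply Rle_trans with (4 / INR k); [apply k_delta_le; assumption|].
    apply Rmult_le_compat_l; [lra|]. apply Rinv_le_contravar; [lra|]. now apply le_INR. }
  assert (H4K : 4 / INR K <= 1 / 8).
  { apply Rmult_le_reg_r with (INR K); [lra|]. unfold Rdiv. rewrite Rmult_assoc, Rinv_l by lra. lra. }
  pose proof (one_sub_epsilon_pow_ge n k (n - 2 * k - 2) Hk ltac:(lra) ltac:(lia)) as Hpow.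
  rewrite n_delta in Hpow.
  set (t := INR n / Q ^ k) in *. set (x := (2 * INR k + 1) * delta q k) in *.
  assert (Htpos : 0 <= t) by apply div_pow_nonneg, pos_INR.
  assert (Hsmall : 1 - 24 * Q ^ 2 / INR K <= exp (- (2 * x * (alpha q * t)))).
  { apply Rle_trans with (1 + - (2 * x * (alpha q * t))); [|apply exp_ineq1_le].
    assert (alpha q * t <= Q ^ 2) by nra.
    assert (2 * x * (alpha q * t) <= 2 * (12 / INR K) * Q ^ 2) by (apply Rmult_le_compat; unfold x; nra).
    replace (24 * Q ^ 2 / INR K) with (2 * (12 / INR K) * Q ^ 2) by (field; lra). lra. }
  assert (HK1 : 0 <= 1 / INR K <= 1 / 8).
  { split; [apply Rmult_le_pos; [lra|apply Rlt_le, Rinv_0_lt_compat; lra]|].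
    apply Rmult_le_reg_r with (INR K); [lra|]. unfold Rdiv. rewrite Rmult_assoc, Rinv_l by lra. lra. }
  assert (Hinv : 1 - 1 / INR K <= 1 - / Q ^ k).
  { pose proof (INR_lt_pow k). assert (INR K <= INR k) by now apply le_INR.
    assert (/ Q ^ k <= / INR K) by (apply Rinv_le_contravar; lra). lra. }
  assert (Hprod : 1 - (1 + 24 * Q ^ 2) / INR K <= (1 - / Q ^ k) * exp (- (2 * x * (alpha q * t)))).
  { replace ((1 + 24 * Q ^ 2) / INR K) with (1 / INR K + 24 * Q ^ 2 / INR K) by (field; lra).
    assert (0 <= 24 * Q ^ 2 / INR K) by (apply Rmult_le_pos; [nra|apply Rlt_le, Rinv_0_lt_compat; lra]).
    pose proof (exp_pos (- (2 * x * (alpha q * t)))). nra. }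
  eapply Rle_trans; [|apply scaled_C1k_ge_pow; [assumption|rewrite Rmult_assoc; lra|assumption]].
  fold t. unfold profile. pose proof (exp_pos (- alpha q * t)).
  apply Rle_trans with (t * (1 - / Q ^ k) * (exp (- alpha q * t) * exp (- (2 * x * (alpha q * t))))).
  - apply Rle_trans with (t * exp (- alpha q * t) * ((1 - / Q ^ k) * exp (- (2 * x * (alpha q * t)))));
      [|right; ring].
    rewrite Rmult_comm. apply Rmult_le_compat_l; [apply Rmult_le_pos; lra|assumption].
  - apply Rmult_le_compat_l; [apply Rmult_le_pos; lra|].
    eapply Rle_trans; [|exact Hpow]. rewrite <- exp_plus. right. f_equal. ring.
Qed.

End ScaledCount.

(** * The three candidates of F *)

Lemma ln_le_compat x y : 0 < x -> x <= y -> ln x <= ln y.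
Proof. intros Hx [H|H]; [now apply Rlt_le, ln_increasing|subst; lra]. Qed.

Lemma Rceil_eq_INR y c : INR c - 1 < y <= INR c -> Rceil y = INR c.
Proof.
  intros H. unfold Rceil, Int_part.
  assert (E : up (- y) = (- Z.of_nat c + 1)%Z).
  { symmetry. apply tech_up; rewrite plus_IZR, opp_IZR, <- INR_IZR_INZ; cbn; lra. }
  rewrite E, minus_IZR, plus_IZR, opp_IZR, <- INR_IZR_INZ. cbn. ring.
Qed.

Lemma exists_pow_bracket q n : (2 <= q)%nat -> (2 <= n)%nat ->
  exists c, (1 <= c)%nat /\ (q ^ (c - 1) < n <= q ^ c)%nat.
Proof.
  intros Hq Hn.
  assert (H : forall m, (n <= q ^ m)%nat -> exists c, (1 <= c)%nat /\ (q ^ (c - 1) < n <= q ^ c)%nat).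
  { induction m as [|m IH]; intros Hm; [cbn in Hm; lia|].
    destruct (Nat.le_gt_cases n (q ^ m)) as [H1|H1]; [now apply IH|].
    exists (S m). replace (S m - 1)%nat with m by lia. lia. }
  apply (H n). pose proof (Nat.pow_gt_lin_r q n ltac:(lia)). lia.
Qed.

Lemma pow2_pred_ge c : (5 <= c)%nat -> (2 * c + 2 <= 2 ^ (c - 1))%nat.
Proof.
  induction 1 as [|m Hm IH]; [cbn; lia|].
  replace (S m - 1)%nat with (S (m - 1)) by lia. cbn. lia.
Qed.

Section Window.

Variable q : nat.
Hypothesis Hq : (2 <= q)%nat.

Local Notation Q := (INR q).

Let Q_ge_2 : 2 <= Q := INR_ge_2 q Hq.

Definition window (n c : nat) : R :=
  Rmax (profile q (INR n / Q ^ (c - 2)))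
       (Rmax (profile q (INR n / Q ^ (c - 1))) (profile q (INR n / Q ^ c))).

Variables n c : nat.
Hypothesis Hc : (2 <= c)%nat.
Hypothesis Hnc : Q ^ (c - 1) < INR n <= Q ^ c.

Let n_pos : 0 < INR n.
Proof. pose proof (pow_lt Q (c - 1) ltac:(lra)). lra. Qed.

Lemma Deltan_bracket : Deltan q n = logq q (INR n) - INR c.
Proof.
  assert (Hl : 0 < ln Q) by (rewrite <- ln_1; apply ln_increasing; lra).
  unfold Deltan. f_equal. apply Rceil_eq_INR. unfold logq.
  assert (E1 : ln (Q ^ (c - 1)) = (INR c - 1) * ln Q)
    by (rewrite ln_pow, minus_INR by (lra || lia); cbn; ring).
  assert (E2 : ln (Q ^ c) = INR c * ln Q) by (rewrite ln_pow by lra; reflexivity).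
  pose proof (ln_increasing _ _ (pow_lt Q (c - 1) ltac:(lra)) (proj1 Hnc)) as L1.
  pose proof (ln_le_compat _ _ n_pos (proj2 Hnc)) as L2.
  split.
  - apply Rmult_lt_reg_r with (ln Q); [assumption|]. unfold Rdiv. rewrite Rmult_assoc, Rinv_l; lra.
  - apply Rmult_le_reg_r with (ln Q); [assumption|]. unfold Rdiv. rewrite Rmult_assoc, Rinv_l; lra.
Qed.

Lemma Rpower_Deltan_add m : (m <= c)%nat -> Rpower Q (Deltan q n + INR m) = INR n / Q ^ (c - m).
Proof.
  intros Hm. assert (Hl : 0 < ln Q) by (rewrite <- ln_1; apply ln_increasing; lra).
  rewrite Deltan_bracket, <- (Rpower_pow (c - m)) by lra. unfold Rpower, logq.
  rewrite minus_INR by assumption.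
  replace ((ln (INR n) / ln Q - INR c + INR m) * ln Q) with (ln (INR n) + - ((INR c - INR m) * ln Q))
    by (field; lra).
  now rewrite exp_plus, exp_ln, exp_Ropp.
Qed.

Lemma Rpower_Fq_Deltan : Rpower Q (Fq q (Deltan q n)) = window n c.
Proof.
  rewrite Rpower_Fq by assumption. unfold window.
  rewrite <- (Rpower_Deltan_add 2), <- (Rpower_Deltan_add 1) by lia.
  replace (INR n / Q ^ c) with (INR n / Q ^ (c - 0)) by (do 3 f_equal; lia).
  rewrite <- (Rpower_Deltan_add 0) by lia. cbn [INR].
  now replace (Deltan q n + 0) with (Deltan q n) by ring.
Qed.

Lemma div_pow_le a b : (a <= b)%nat -> INR n / Q ^ b <= INR n / Q ^ a.
Proof.
  intros Hab. apply Rmult_le_compat_l; [lra|].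
  apply Rinv_le_contravar; [apply pow_lt; lra|]. apply Rle_pow; [lra|assumption].
Qed.

(* [profile] increases up to [1 / alpha <= 2] and decreases from there; the window straddles it. *)
Lemma profile_le_window k : profile q (INR n / Q ^ k) <= window n c.
Proof.
  pose proof (alpha_bounds q Hq). unfold window.
  assert (Hpos : forall j, 0 <= INR n / Q ^ j) by (intros j; apply (div_pow_nonneg q Hq); lra).
  destruct (Nat.le_gt_cases c k) as [Hk|Hk].
  - apply Rle_trans with (profile q (INR n / Q ^ c)); [|eapply Rle_trans; apply Rmax_r].
    apply profile_le_increasing; [assumption|split; [apply Hpos|apply div_pow_le, Hk]|].
    assert (INR n / Q ^ c <= 1).
    { apply Rmult_le_reg_r with (Q ^ c); [apply pow_lt; lra|].
      unfold Rdiv. rewrite Rmult_assoc, Rinv_l by (apply pow_nonzero; lra). lra. }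
    pose proof (Hpos c). nra.
  - destruct (Nat.eq_dec k (c - 1)) as [->|E]; [eapply Rle_trans; [apply Rmax_l|apply Rmax_r]|].
    apply Rle_trans with (profile q (INR n / Q ^ (c - 2))); [|apply Rmax_l].
    apply profile_le_decreasing; [assumption| |apply div_pow_le; lia].
    assert (Q < INR n / Q ^ (c - 2)); [|nra].
    apply Rmult_lt_reg_r with (Q ^ (c - 2)); [apply pow_lt; lra|].
    unfold Rdiv. rewrite Rmult_assoc, Rinv_l by (apply pow_nonzero; lra).
    replace (Q * Q ^ (c - 2)) with (Q ^ (c - 1)); [lra|].
    replace (c - 1)%nat with (S (c - 2)) by lia. reflexivity.
Qed.

Lemma window_ge_exp : exp (- Q) <= window n c.
Proof.
  eapply Rle_trans; [|apply profile_le_window with (k := (c - 1)%nat)].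
  apply profile_ge_exp; [assumption|].
  pose proof (pow_lt Q (c - 1) ltac:(lra)).
  split; apply Rmult_le_reg_r with (Q ^ (c - 1)); try assumption;
    unfold Rdiv; rewrite Rmult_assoc, Rinv_l by lra; [lra|].
  replace (Q * Q ^ (c - 1)) with (Q ^ c); [lra|]. replace c with (S (c - 1)) at 1 by lia. reflexivity.
Qed.

Lemma window_attained : exists k, (c - 2 <= k <= c)%nat /\ profile q (INR n / Q ^ k) = window n c.
Proof.
  unfold window, Rmax.
  destruct (Rle_dec (profile q (INR n / Q ^ (c - 1))) (profile q (INR n / Q ^ c))),
           (Rle_dec (profile q (INR n / Q ^ (c - 2))) _);
    eexists; (split; [|reflexivity]); lia.
Qed.

End Window.

(** * Asymptotics *)

Lemma Un_cv_div_one (u v : nat -> R) :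
  (forall eps, 0 < eps -> exists N, forall n, (N <= n)%nat ->
     0 < v n /\ (1 - eps) * v n <= u n <= (1 + eps) * v n) ->
  Un_cv (fun n => u n / v n) 1.
Proof.
  intros H eps Heps. destruct (H (eps / 2) ltac:(lra)) as [N HN]. exists N. intros n Hn.
  destruct (HN n ltac:(lia)) as [Hv Hb].
  assert (Hr : 1 - eps / 2 <= u n / v n <= 1 + eps / 2).
  { split; apply Rmult_le_reg_r with (v n); try assumption;
      unfold Rdiv; rewrite Rmult_assoc, Rinv_l, Rmult_1_r by lra; lra. }
  unfold R_dist. apply Rabs_def1; lra.
Qed.

Section Sandwich.

Variable q : nat.
Hypothesis Hq : (2 <= q)%nat.

Local Notation Q := (INR q).

Let Q_ge_2 : 2 <= Q := INR_ge_2 q Hq.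

Definition C1_scale (n : nat) : R := Q ^ n / INR n * alpha q ^ 2.

Lemma C1_scale_pos n : (1 <= n)%nat -> 0 < C1_scale n.
Proof.
  intros Hn. pose proof (alpha_bounds q Hq). unfold C1_scale.
  apply Rmult_lt_0_compat; [|apply pow_lt; lra].
  apply Rdiv_lt_0_compat; [apply pow_lt; lra|apply lt_0_INR; lia].
Qed.

(* The word [0^(n-1) d] gives [|C_1(n,q,n-1)| = q - 1], negligible against [q^n / n]. *)
Lemma pred_q_le_scale n : 64 * exp Q + 2 <= INR n -> Q - 1 <= C1_scale n * exp (- Q).
Proof.
  intros Hn. pose proof (alpha_bounds q Hq). pose proof (alpha_mul q Hq). pose proof (exp_pos Q).
  assert (Hn1 : (1 <= n)%nat) by (apply INR_le; cbn; lra).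
  assert (Hsq : INR (n - 1) * INR (n - 1) <= 4 * Q ^ (n - 1)).
  { rewrite <- mult_INR. apply Rle_trans with (INR (4 * 2 ^ (n - 1))); [apply le_INR, nat_sq_le_pow2|].
    rewrite mult_INR, pow_INR. replace (INR 4) with 4 by (cbn; ring).
    apply Rmult_le_compat_l; [lra|]. apply pow_incr. cbn; lra. }
  rewrite minus_INR in Hsq by assumption. cbn [INR] in Hsq.
  assert (HQn : Q ^ n = Q * Q ^ (n - 1)) by (replace n with (S (n - 1)) at 1 by lia; reflexivity).
  assert (H16 : INR n * (16 * exp Q) <= (INR n - 1) * (INR n - 1)) by nra.
  unfold C1_scale. rewrite exp_Ropp. apply Rmult_le_reg_r with (INR n * exp Q); [nra|].
  replace (Q ^ n / INR n * alpha q ^ 2 * / exp Q * (INR n * exp Q)) with (Q ^ n * alpha q ^ 2)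
    by (field; lra).
  rewrite HQn.
  assert (Q ^ (n - 1) >= INR n * (4 * exp Q)) by nra.
  assert (alpha q ^ 2 >= 1/4) by (cbn; nra).
  assert (0 <= Q ^ (n - 1)) by (apply pow_le; lra).
  assert (Q * Q ^ (n - 1) * alpha q ^ 2 >= Q * Q ^ (n - 1) * (1/4))
    by (apply Rle_ge, Rmult_le_compat_l; nra).
  nra.
Qed.

Section Bracket.

Variables K n c : nat.
Hypothesis HK : (32 <= K)%nat.
Hypothesis HKc : (K + 2 <= c)%nat.
Hypothesis Hcn : (2 * c + 2 <= n)%nat.
Hypothesis Hnc : Q ^ (c - 1) < INR n <= Q ^ c.

Let n_pos : 0 < INR n.
Proof. apply lt_0_INR. lia. Qed.

Lemma window_le_C1max :
  (1 - (1 + 24 * Q ^ 2) / INR K) * (C1_scale n * window q n c) <= INR (C1max n q).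
Proof.
  destruct (window_attained q Hq n c ltac:(lia)) as [k [Hk EM]].
  apply Rle_trans with (INR (C1k n q k)); [|apply le_INR, C1k_le_C1max; lia].
  rewrite C1k_scaled by lia. fold (C1_scale n).
  pose proof (C1_scale_pos n ltac:(lia)).
  apply Rle_trans with (C1_scale n * ((1 - (1 + 24 * Q ^ 2) / INR K) * window q n c)); [right; ring|].
  apply Rmult_le_compat_l; [lra|].
  rewrite <- EM. apply (scaled_C1k_lower q Hq n k K); [assumption|lia|lia|].
  assert (Q ^ c <= Q ^ k * Q ^ 2) by (rewrite <- pow_add; apply Rle_pow; [lra|lia]).
  pose proof (pow_lt Q k ltac:(lra)).
  apply Rmult_le_reg_r with (Q ^ k); [assumption|].
  unfold Rdiv. rewrite Rmult_assoc, Rinv_l by lra. lra.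
Qed.

Hypothesis Hn_exp : 64 * exp Q + 2 <= INR n.
Hypothesis Hn_small : 16 * Q ^ K / ((3 / 4) ^ (2 * K) * exp (- Q)) <= INR n.

(* Short runs ([k < K]) are negligible: their scaled count is [O(1/n)]. *)
Lemma scaled_C1k_small_le_exp k : (1 <= k)%nat -> (k < K)%nat -> (k + 2 <= n)%nat ->
  scaled_C1k q n k <= exp (- Q).
Proof.
  intros Hk HkK Hkn. pose proof (exp_pos (- Q)). set (w := (3 / 4) ^ (2 * K)) in *.
  assert (Hw : 0 < w) by (apply pow_lt; lra).
  eapply Rle_trans; [apply (scaled_C1k_upper_small q Hq n k K); assumption|]. fold w.
  apply Rmult_le_reg_r with (INR n * w); [nra|].
  replace (16 * Q ^ K / (INR n * w) * (INR n * w)) with (16 * Q ^ K) by (field; lra).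
  apply Rmult_le_reg_r with (/ (w * exp (- Q))); [apply Rinv_0_lt_compat; nra|].
  replace (exp (- Q) * (INR n * w) * / (w * exp (- Q))) with (INR n) by (field; lra).
  exact Hn_small.
Qed.

Lemma C1k_le_window k : (1 <= k)%nat -> (k + 1 <= n)%nat ->
  INR (C1k n q k) <= (1 + 32 / INR K) * (C1_scale n * window q n c).
Proof.
  intros Hk Hkn. pose proof (C1_scale_pos n ltac:(lia)).
  assert (HKr : 32 <= INR K) by (replace 32 with (INR 32) by (cbn; ring); apply le_INR; assumption).
  assert (H32 : 0 <= 32 / INR K) by (apply Rmult_le_pos; [lra|apply Rlt_le, Rinv_0_lt_compat; lra]).
  pose proof (window_ge_exp q Hq n c ltac:(lia) Hnc). pose proof (exp_pos (- Q)).
  destruct (Nat.eq_dec (k + 1) n) as [Ek|Ek].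
  - rewrite C1k_last, minus_INR by lia. cbn [INR].
    pose proof (pred_q_le_scale n Hn_exp).
    assert (C1_scale n * exp (- Q) <= C1_scale n * window q n c) by (apply Rmult_le_compat_l; lra).
    nra.
  - rewrite C1k_scaled by lia. fold (C1_scale n).
    apply Rle_trans with (C1_scale n * ((1 + 32 / INR K) * window q n c)); [|right; ring].
    apply Rmult_le_compat_l; [lra|].
    pose proof (profile_le_window q Hq n c ltac:(lia) Hnc k).
    destruct (Nat.le_gt_cases K k) as [HKk|HKk].
    + eapply Rle_trans; [apply (scaled_C1k_upper_large q Hq n k K); lia|].
      apply Rmult_le_compat_l; [lra|assumption].
    + eapply Rle_trans; [apply scaled_C1k_small_le_exp; lia|]. nra.
Qed.

Lemma C1max_le_window : INR (C1max n q) <= (1 + 32 / INR K) * (C1_scale n * window q n c).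
Proof.
  destruct (C1max_attained n q) as [->|[k [Hk1 [Hk2 ->]]]]; [|now apply C1k_le_window].
  pose proof (C1_scale_pos n ltac:(lia)). pose proof (window_ge_exp q Hq n c ltac:(lia) Hnc).
  pose proof (exp_pos (- Q)).
  assert (HKr : 0 < INR K) by (apply lt_0_INR; lia).
  assert (0 <= 32 / INR K) by (apply Rmult_le_pos; [lra|apply Rlt_le, Rinv_0_lt_compat; lra]).
  cbn [INR]. apply Rmult_le_pos; [lra|]. apply Rmult_le_pos; lra.
Qed.

End Bracket.

Lemma exists_window_index K n : (3 <= K)%nat -> (q ^ (K + 1) < n)%nat ->
  exists c, (K + 2 <= c)%nat /\ (2 * c + 2 <= n)%nat /\ Q ^ (c - 1) < INR n <= Q ^ c.
Proof.
  intros HK Hn. assert (Hn2 : (2 <= n)%nat).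
  { pose proof (Nat.pow_gt_lin_r q (K + 1) ltac:(lia)). lia. }
  destruct (exists_pow_bracket q n Hq Hn2) as [c [Hc1 [Hc2 Hc3]]].
  assert (HcK : (K + 2 <= c)%nat).
  { destruct (Nat.le_gt_cases (K + 2) c) as [H|H]; [assumption|].
    assert (q ^ c <= q ^ (K + 1))%nat by (apply Nat.pow_le_mono_r; lia). lia. }
  exists c. split; [assumption|split].
  - pose proof (pow2_pred_ge c ltac:(lia)).
    assert (2 ^ (c - 1) <= q ^ (c - 1))%nat by (apply Nat.pow_le_mono_l; lia). lia.
  - rewrite <- !pow_INR. split; [apply lt_INR|apply le_INR]; assumption.
Qed.

Lemma C1max_sandwich eps : 0 < eps -> exists N, forall n, (N <= n)%nat ->
  0 < C1_scale n * Rpower Q (Fq q (Deltan q n)) /\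
  (1 - eps) * (C1_scale n * Rpower Q (Fq q (Deltan q n))) <= INR (C1max n q) <=
  (1 + eps) * (C1_scale n * Rpower Q (Fq q (Deltan q n))).
Proof.
  intros Heps.
  destruct (INR_unbounded (Rmax 32 ((32 + 24 * Q ^ 2) / eps))) as [K HK].
  pose proof (Rmax_l 32 ((32 + 24 * Q ^ 2) / eps)). pose proof (Rmax_r 32 ((32 + 24 * Q ^ 2) / eps)).
  assert (HK32 : (32 <= K)%nat) by (apply INR_le; replace (INR 32) with 32 by (cbn; ring); lra).
  assert (HKeps : 32 + 24 * Q ^ 2 <= eps * INR K).
  { apply Rmult_le_reg_r with (/ eps); [now apply Rinv_0_lt_compat|].
    replace (eps * INR K * / eps) with (INR K) by (field; lra). unfold Rdiv in *. lra. }
  assert (HKr : 32 <= INR K) by lra.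
  assert (Hup : 32 / INR K <= eps).
  { apply Rmult_le_reg_r with (INR K); [lra|]. unfold Rdiv. rewrite Rmult_assoc, Rinv_l by lra.
    pose proof (pow2_ge_0 Q). lra. }
  assert (Hlo : (1 + 24 * Q ^ 2) / INR K <= eps).
  { apply Rmult_le_reg_r with (INR K); [lra|]. unfold Rdiv. rewrite Rmult_assoc, Rinv_l by lra. lra. }
  destruct (INR_unbounded (16 * Q ^ K / ((3 / 4) ^ (2 * K) * exp (- Q)))) as [N1 HN1].
  destruct (INR_unbounded (64 * exp Q + 2)) as [N2 HN2].
  exists (N1 + N2 + q ^ (K + 1) + 1)%nat. intros n Hn.
  destruct (exists_window_index K n ltac:(lia) ltac:(lia)) as [c [HKc [Hcn Hnc]]].
  assert (INR N1 <= INR n) by (apply le_INR; lia). assert (INR N2 <= INR n) by (apply le_INR; lia).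
  rewrite (Rpower_Fq_Deltan q Hq n c ltac:(lia) Hnc).
  pose proof (C1_scale_pos n ltac:(lia)). pose proof (window_ge_exp q Hq n c ltac:(lia) Hnc).
  pose proof (exp_pos (- Q)).
  pose proof (window_le_C1max K n c HK32 HKc Hcn Hnc).
  pose proof (C1max_le_window K n c HK32 HKc Hcn Hnc ltac:(lra) ltac:(lra)).
  assert (0 < C1_scale n * window q n c) by (apply Rmult_lt_0_compat; lra).
  split; [assumption|split; nra].
Qed.

End Sandwich.

Lemma Un_cv_const c : Un_cv (fun _ => c) c.
Proof. intros eps Heps. exists 0%nat. intros. unfold R_dist. now rewrite Rminus_diag, Rabs_R0. Qed.

Lemma Un_cv_Rmax u v l m : Un_cv u l -> Un_cv v m -> Un_cv (fun i => Rmax (u i) (v i)) (Rmax l m).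
Proof.
  intros Hu Hv eps Heps. destruct (Hu eps Heps) as [N1 H1], (Hv eps Heps) as [N2 H2].
  exists (N1 + N2)%nat. intros n Hn. specialize (H1 n ltac:(lia)). specialize (H2 n ltac:(lia)).
  unfold R_dist in *. apply Rabs_def2 in H1, H2. apply Rabs_def1;
    unfold Rmax; destruct (Rle_dec (u n) (v n)), (Rle_dec l m); lra.
Qed.

Lemma Un_cv_subseq u l phi : (forall k, (phi k < phi (S k))%nat) -> Un_cv u l ->
  Un_cv (fun k => u (phi k)) l.
Proof.
  intros Hphi Hu eps Heps. destruct (Hu eps Heps) as [N HN]. exists N. intros n Hn.
  apply HN. enough (forall k, (k <= phi k)%nat) by (specialize (H n); lia).
  induction k as [|k IH]; [lia|]. specialize (Hphi k). lia.
Qed.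

Section Asymptotics.

Variable q : nat.
Hypothesis Hq : (2 <= q)%nat.

Local Notation Q := (INR q).

Let Q_ge_2 : 2 <= Q := INR_ge_2 q Hq.

Lemma C1max_asymptotic :
  Un_cv (fun n => INR (C1max n q) /
                  ((Q ^ n / INR n) * ((Q - 1) / Q) ^ 2 * Rpower Q (Fq q (Deltan q n)))) 1.
Proof. exact (Un_cv_div_one _ _ (C1max_sandwich q Hq)). Qed.

Lemma Fq_constant_le D : ((Q - 1) / Q) ^ 2 * Rpower Q (Fq q D) <= (Q - 1) / (exp 1 * Q).
Proof.
  pose proof (alpha_bounds q Hq). pose proof (exp_pos 1). fold (alpha q).
  rewrite Rpower_Fq by assumption.
  apply Rle_trans with (alpha q ^ 2 * / (alpha q * exp 1)).
  - apply Rmult_le_compat_l; [apply pow_le; lra|].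
    repeat apply Rmax_lub; apply profile_le_max; assumption.
  - right. unfold alpha. field. lra.
Qed.

(* At [D = -log_q (q-1)] the middle candidate [q^(D+1) = q/(q-1) = 1/alpha] is the peak of [profile]. *)
Lemma Rpower_Fq_optimum : Rpower Q (Fq q (- logq q (Q - 1))) = / (alpha q * exp 1).
Proof.
  pose proof (alpha_bounds q Hq). rewrite Rpower_Fq by assumption.
  apply Rle_antisym; [repeat apply Rmax_lub; apply profile_le_max; assumption|].
  eapply Rle_trans; [|apply Rmax_r]. eapply Rle_trans; [|apply Rmax_l].
  rewrite <- profile_inv_alpha by assumption. right. f_equal.
  assert (Hl : 0 < ln Q) by (rewrite <- ln_1; apply ln_increasing; lra).
  unfold logq, Rpower.
  replace ((- (ln (Q - 1) / ln Q) + 1) * ln Q) with (ln Q + - ln (Q - 1)) by (field; lra).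
  rewrite exp_plus, exp_Ropp, !exp_ln by lra. unfold alpha. field. lra.
Qed.

Lemma profile_Rpower_cv (u : nat -> R) l :
  Un_cv u l -> Un_cv (fun k => profile q (Rpower Q (u k))) (profile q (Rpower Q l)).
Proof.
  apply (continuity_seq (fun y => profile q (Rpower Q y))).
  unfold profile, Rpower. reg.
Qed.

Lemma Rpower_Fq_cv (u : nat -> R) l : Un_cv u l ->
  Un_cv (fun k => Rpower Q (Fq q (u k))) (Rpower Q (Fq q l)).
Proof.
  intros Hu. eapply Un_cv_ext; [intros k; symmetry; apply Rpower_Fq, Hq|].
  rewrite Rpower_Fq by assumption.
  apply Un_cv_Rmax; [|apply Un_cv_Rmax]; apply profile_Rpower_cv; try assumption;
    apply CV_plus; [assumption|apply Un_cv_const|assumption|apply Un_cv_const].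
Qed.

Lemma C1max_normalized m :
  INR (C1max m q) * INR m / Q ^ m =
  INR (C1max m q) / ((Q ^ m / INR m) * ((Q - 1) / Q) ^ 2 * Rpower Q (Fq q (Deltan q m))) *
  ((Q - 1) / Q) ^ 2 * Rpower Q (Fq q (Deltan q m)).
Proof.
  destruct m as [|m]; [change (C1max 0 q) with 0%nat; cbn [INR]; unfold Rdiv; ring|].
  pose proof (alpha_bounds q Hq). pose proof (pow_lt Q (S m) ltac:(lra)).
  assert (0 < INR (S m)) by apply lt_0_INR, Nat.lt_0_succ.
  assert (0 < Rpower Q (Fq q (Deltan q (S m)))) by apply exp_pos.
  fold (alpha q). field. repeat split; lra.
Qed.

Lemma C1max_tight (phi : nat -> nat) :
  (forall k, (phi k < phi (S k))%nat) ->
  Un_cv (fun k => Deltan q (phi k)) (- logq q (Q - 1)) ->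
  Un_cv (fun k => INR (C1max (phi k) q) * INR (phi k) / Q ^ (phi k)) ((Q - 1) / (exp 1 * Q)).
Proof.
  intros Hphi HD.
  pose proof (CV_mult _ _ _ _
    (CV_mult _ _ _ _ (Un_cv_subseq _ _ phi Hphi C1max_asymptotic) (Un_cv_const (((Q - 1) / Q) ^ 2)))
    (Rpower_Fq_cv _ _ HD)) as H.
  eapply Un_cv_ext; [intros k; symmetry; apply C1max_normalized|].
  replace ((Q - 1) / (exp 1 * Q)) with (1 * ((Q - 1) / Q) ^ 2 * Rpower Q (Fq q (- logq q (Q - 1)))).
  - exact H.
  - pose proof (alpha_bounds q Hq). pose proof (exp_pos 1).
    rewrite Rpower_Fq_optimum. unfold alpha. field. lra.
Qed.

End Asymptotics.

Theorem theorem2 (q : nat) (hq : (2 <= q)%nat) :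
  (* asymptotics *)
  Un_cv (fun n : nat =>
           INR (C1max n q) /
           ((INR q ^ n / INR n) * ((INR q - 1) / INR q) ^ 2 * Rpower (INR q) (Fq q (Deltan q n))))
        1
  /\
  (* upper bound on the constant *)
  (forall D : R, -1 < D <= 0 ->
     ((INR q - 1) / INR q) ^ 2 * Rpower (INR q) (Fq q D) <= (INR q - 1) / (exp 1 * INR q))
  /\
  (* tightness along subsequences with Delta_n -> -log_q(q-1) *)
  (forall phi : nat -> nat,
     (forall k, (phi k < phi (S k))%nat) ->
     Un_cv (fun k => Deltan q (phi k)) (- logq q (INR q - 1)) ->
     Un_cv (fun k => INR (C1max (phi k) q) * INR (phi k) / INR q ^ (phi k))
           ((INR q - 1) / (exp 1 * INR q))).
Proof.
  split; [|split].
  - exact (C1max_asymptotic q hq).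
  - intros D _. exact (Fq_constant_le q hq D).
  - exact (C1max_tight q hq).
Qed.
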